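(* Let $(X,\leq)$ be a poset and $K$ a field, write $FI=FI(X,K)$ and $J=J(FI(X,K))$ (the Jacobson radical). For $k>0$ let $Z_k=\{\alpha\in FI\mid \alpha_{xy}=0 \text{ whenever } l(x,y)\leq k-1\}$. Then: (1) $FI^{(1)}\subseteq Z_1=J$; (2) $Z_mZ_n\subseteq Z_{m+n}$ for all $m,n>0$; (3) $\gamma_n(J)\subseteq Z_n$ for all $n>0$; (4) $FI^{(n)}\subseteq Z_{2^{n-1}}$ for all $n>0$; (5) $J^{(n)}\subseteq Z_{2^n}$ for all $n\geq0$.
   Context: $FI(X,K)$ is the finitary incidence algebra: the $K$-vector space of formal sums $\alpha=\sum_{x\leq y}\alpha_{xy}e_{xy}$ ($x,y\in X$, $\alpha_{xy}\in K$) such that for every pair $x<y$ only finitely many $x\leq u<v\leq y$ have $\alpha_{uv}\neq0$, with convolution product $\alpha\beta=\sum_{x\leq y}\big(\sum_{x\leq z\leq y}\alpha_{xz}\beta_{zy}\big)e_{xy}$. For $x\leq y$, $l(x,y)$ is the length of the interval $\{z\mid x\leq z\leq y\}$, i.e. the supremum of $|C|-1$ over finite chains $C$ in it. With $[a,b]=ab-ba$ and $UV$, $[U,V]$ the spans of products, commutators: $FI^{(0)}=FI$, $FI^{(n+1)}=[FI^{(n)},FI^{(n)}]FI$; $J^{(0)}=J$, $J^{(n+1)}=[J^{(n)},J^{(n)}]J$; $\gamma_1(J)=J$, $\gamma_{n+1}(J)=[\gamma_n(J),J]$. *)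

From HB Require Import structures.
From mathcomp Require Import all_boot all_order all_algebra.
From mathcomp Require Import boolp classical_sets functions cardinality fsbigop.
Set Implicit Arguments. Unset Strict Implicit. Unset Printing Implicit Defensive.
Import Order.TTheory GRing.Theory.
Local Open Scope classical_set_scope.
Local Open Scope ring_scope.

Section FI.
Variables (d : Order.disp_t) (X : porderType d) (K : fieldType).

(* raw matrices indexed by X, i.e. formal sums  sum a_xy e_xy *)
Definition mat := X -> X -> K.

Definition incidence (a : mat) : Prop :=
  forall x y : X, ~~ (x <= y)%O -> a x y = 0.

Definition finitary (a : mat) : Prop :=
  forall x y : X, (x < y)%O ->
    finite_set [set uv : X * X |
      [/\ (x <= uv.1)%O, (uv.1 < uv.2)%O, (uv.2 <= y)%O & a uv.1 uv.2 != 0]].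

Definition FI (a : mat) : Prop := incidence a /\ finitary a.

Definition mzero : mat := fun _ _ => 0.
Definition mone : mat := fun x y => if x == y then 1 else 0.
Definition madd (a b : mat) : mat := fun x y => a x y + b x y.
Definition mopp (a : mat) : mat := fun x y => - a x y.
Definition mscale (c : K) (a : mat) : mat := fun x y => c * a x y.
(* convolution product; for finitary a, the sum has finitely many
   nonzero terms, and \sum_(z \in A) is the finitely supported sum. *)
Definition mmul (a b : mat) : mat := fun x y =>
  \sum_(z \in [set z : X | (x <= z)%O /\ (z <= y)%O]) (a x z * b z y).
Definition mcomm (a b : mat) : mat := madd (mmul a b) (mopp (mmul b a)).

Definition Jac (a : mat) : Prop :=
  FI a /\ forall r, FI r ->
    exists s, FI s /\ mmul s (madd mone (mopp (mmul r a))) = mone.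

Inductive span (P : mat -> Prop) : mat -> Prop :=
  | span_in a : P a -> span P a
  | span0 : span P mzero
  | spanD a b : span P a -> span P b -> span P (madd a b)
  | spanZ c a : span P a -> span P (mscale c a).

Definition prodset (U V : mat -> Prop) : mat -> Prop :=
  span (fun a => exists u v, [/\ U u, V v & a = mmul u v]).
Definition commset (U V : mat -> Prop) : mat -> Prop :=
  span (fun a => exists u v, [/\ U u, V v & a = mcomm u v]).

Fixpoint FIder (n : nat) : mat -> Prop :=
  match n with
  | 0 => FI
  | m.+1 => prodset (commset (FIder m) (FIder m)) FI
  end.

Fixpoint Jder (n : nat) : mat -> Prop :=
  match n with
  | 0 => Jac
  | m.+1 => prodset (commset (Jder m) (Jder m)) Jac
  end.

(* gamma_n(J), n >= 1 (gamma 0 is a junk value equal to J) *)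
Fixpoint gamma (n : nat) : mat -> Prop :=
  match n with
  | 0 | 1 => Jac
  | (m.+1) as k => commset (gamma m) Jac
  end.

(* l(x,y) <= n : every finite chain in [x,y] has at most n+1 elements
   (finite chains = strictly increasing sequences) *)
Definition len_le (x y : X) (n : nat) : Prop :=
  forall s : seq X, sorted (fun u v => (u < v)%O) s ->
    all (fun z => (x <= z)%O && (z <= y)%O) s -> (size s <= n.+1)%N.

Definition Zk (k : nat) (a : mat) : Prop :=
  FI a /\ forall x y : X, (x <= y)%O -> len_le x y k.-1 -> a x y = 0.

Definition subset_of (P Q : mat -> Prop) : Prop := forall a, P a -> Q a.

End FI.

From Pilot Require Import Defs.
From HB Require Import structures.
From mathcomp Require Import all_boot all_order all_algebra.
From mathcomp Require Import boolp classical_sets functions cardinality fsbigop.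
From mathcomp Require Import finmap.
Set Implicit Arguments. Unset Strict Implicit. Unset Printing Implicit Defensive.
Import Order.TTheory GRing.Theory.
Local Open Scope classical_set_scope.
Local Open Scope ring_scope.

(* Describe Z_k by supports: a lies in Z_k iff a_xy <> 0 only where l(x,y) >= k.
   A nonzero entry of a product ab at (x,y) factors through some z with a_xz and
   b_zy nonzero, and chains in [x,z] and [z,y] concatenate, so Z_m Z_n is in Z_(m+n).
   Commutators have zero diagonal, hence lie in Z_1, and the derived-series bounds
   follow by induction, the exponent doubling at each step.  J = Z_1: if a_xx <> 0
   then 1 - a_xx^-1 a has a zero diagonal entry and no left inverse; if b has zero
   diagonal then 1 - b is inverted by the geometric series of b, which is locally
   finite because (b^n)_xy <> 0 forces n to be at most the number of nonzero
   off-diagonal entries of b inside [x,y]. *)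

Section Chains.
Variables (d : Order.disp_t) (X : porderType d).
Implicit Types (x y z : X) (k m n : nat).

Definition len_ge x y k : Prop :=
  exists s : seq X, [/\ sorted (fun u v => (u < v)%O) s,
    all (fun z => (x <= z)%O && (z <= y)%O) s & (k < size s)%N].

Lemma len_leNge x y n : len_le x y n <-> ~ len_ge x y n.+1.
Proof.
split=> [le_xy [s [s_lt s_in]]|nge s s_lt s_in]; first by rewrite ltnNge le_xy.
by rewrite leqNgt; apply/negP => gt_s; apply: nge; exists s.
Qed.

Lemma len_ge_leq x y m n : (m <= n)%N -> len_ge x y n -> len_ge x y m.
Proof. by move=> le_mn [s [s_lt s_in lt_ns]]; exists s; split=> //; apply: leq_ltn_trans lt_ns. Qed.

Lemma len_ge_le x y k : len_ge x y k -> (x <= y)%O.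
Proof. by case=> -[|u s] [//= _ /andP[/andP[xu uy] _] _]; apply: le_trans xu uy. Qed.

Lemma len_ge0 x y : len_ge x y 0 <-> (x <= y)%O.
Proof. by split=> [|le_xy]; [apply: len_ge_le | exists [:: x]; rewrite /= lexx le_xy]. Qed.

Lemma len_ge1 x y : len_ge x y 1 <-> (x < y)%O.
Proof.
split=> [[[|u [|v s]] []] //= /andP[uv _] /and3P[/andP[xu _] /andP[_ vy] _] _|lt_xy].
  exact: le_lt_trans xu (lt_le_trans uv vy).
by exists [:: x; y]; split; rewrite /= ?lt_xy ?lexx ?(ltW lt_xy).
Qed.

Lemma len_geD x z y m n : len_ge x z m -> len_ge z y n -> len_ge x y (m + n).
Proof.
move=> ge_xz ge_zy; have le_xz := len_ge_le ge_xz; have le_zy := len_ge_le ge_zy.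
case: ge_xz ge_zy => + [+ + +] [t [t_lt t_in lt_nt]]; case/lastP => [//|s w].
have lt_trans : transitive (fun u v : X => (u < v)%O) by move=> ? ? ?; apply: lt_trans.
rewrite sorted_pairwise // -cats1 pairwise_cat all_cat size_cat addn1 ltnS /= !andbT.
move=> /andP[/allrelP s_lt_w s_lt] /and3P[s_in _ le_wz] le_ms.
exists (s ++ t); split.
- rewrite sorted_pairwise // pairwise_cat s_lt -sorted_pairwise // t_lt !andbT.
  apply/allrelP => u v us vt; have /andP[le_zv _] := allP t_in v vt.
  exact: lt_le_trans (s_lt_w u w us (mem_head _ _)) (le_trans le_wz le_zv).
- rewrite all_cat; apply/andP; split; apply/allP => u us.
    have /andP[-> le_uz] := allP s_in u us; exact: le_trans le_uz le_zy.
  by have /andP[le_zu ->] := allP t_in u us; rewrite (le_trans le_xz le_zu).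
- by rewrite size_cat -addnS leq_add.
Qed.

End Chains.

Section IncidenceAlgebra.
Variables (d : Order.disp_t) (X : porderType d) (K : fieldType).
Local Notation M := (@mat d X K).
Local Notation one := (@mone d X K).
Implicit Types (a b : M) (x y z u v : X).

Definition offdiag_supp a x y : set (X * X) :=
  [set uv | [/\ (x <= uv.1)%O, (uv.1 < uv.2)%O, (uv.2 <= y)%O & a uv.1 uv.2 != 0]].

Lemma finite_offdiag_supp a x y : finitary a -> finite_set (offdiag_supp a x y).
Proof.
move=> fin_a; have [lt_xy|nlt_xy] := boolP (x < y)%O; first exact: fin_a.
suff -> : offdiag_supp a x y = set0 by exact: finite_set0.
apply/seteqP; split=> // -[u v] [/= xu uv vy _].
by move: nlt_xy; rewrite (le_lt_trans xu (lt_le_trans uv vy)).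
Qed.

Definition supp_ends a x y : set X :=
  fst @` offdiag_supp a x y `|` snd @` offdiag_supp a x y.

Lemma finite_supp_ends a x y : finitary a -> finite_set (supp_ends a x y).
Proof. by move=> fin_a; rewrite finite_setU; split; apply/finite_image/finite_offdiag_supp. Qed.

Lemma incidence_le a x y : incidence a -> a x y != 0 -> (x <= y)%O.
Proof. by move=> inc_a; apply: contraNT => /inc_a ->. Qed.

Lemma mmul_neq0 a b x y : mmul a b x y != 0 ->
  exists z, [/\ (x <= z)%O, (z <= y)%O, a x z != 0 & b z y != 0].
Proof.
move=> /(@fsbigN1 _ _ _ unit _ _ (fun _ z => a x z * b z y) tt) [z [xz zy]].
by rewrite mulf_eq0 negb_or => /andP[]; exists z.
Qed.

Lemma mmul_diag a b x : mmul a b x x = a x x * b x x.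
Proof.
rewrite /mmul (@eq_fsbigl _ _ _ _ _ _ [set x]) ?fsbig_set1 //.
apply/seteqP; split=> [z [xz zx]|z ->]; last by split.
by apply/eqP; rewrite eq_le zx xz.
Qed.

Lemma mmul_fsetE a b x y (S : {fset X}) :
  (forall z, z \in S -> (x <= z)%O /\ (z <= y)%O) ->
  (forall z, (x <= z)%O -> b z y != 0 -> z \in S) ->
  mmul a b x y = \sum_(z <- S) a x z * b z y.
Proof.
move=> S_sub in_S; rewrite /mmul -(fsbig_widen [set` S]) => [|z /S_sub //|z [[xz zy] S'z]].
  by rewrite -fsbig_seq ?fset_uniq.
have [bz|/(in_S _ xz)/S'z //] := eqVneq (b z y) 0.
by rewrite /preimage /= bz mulr0.
Qed.

Lemma incidence_mmul a b : incidence (mmul a b).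
Proof. by move=> x y; apply: contraNeq => /mmul_neq0 [z [xz zy _ _]]; apply: le_trans xz zy. Qed.

Lemma FI_mmul a b : FI a -> FI b -> FI (mmul a b).
Proof.
move=> [inc_a fin_a] [inc_b fin_b]; split=> [|x y _]; first exact: incidence_mmul.
pose E := supp_ends a x y `|` supp_ends b x y.
apply: (@sub_finite_set _ _ (E `*` E)); last first.
  by apply: finite_setX; rewrite finite_setU; split; apply: finite_supp_ends.
move=> [u v] [/= xu uv vy /mmul_neq0 [z [uz zv az bz]]]; split=> /=.
  have [euz|nuz] := eqVneq u z; first by subst z; right; left; exists (u, v).
  by left; left; exists (u, z) => //; split; rewrite /= ?lt_neqAle ?nuz ?(le_trans zv vy).
have [ezv|nzv] := eqVneq z v; first by subst z; left; right; exists (u, v).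
by right; right; exists (z, v) => //; split; rewrite /= ?lt_neqAle ?nzv ?(le_trans xu uz).
Qed.

Lemma FI_madd a b : FI a -> FI b -> FI (madd a b).
Proof.
move=> [inc_a fin_a] [inc_b fin_b]; split=> [x y nxy|x y _].
  by rewrite /madd inc_a // inc_b // addr0.
apply: (@sub_finite_set _ _ (offdiag_supp a x y `|` offdiag_supp b x y)).
  move=> [u v] [/= xu uv vy]; rewrite /madd; have [az|] := eqVneq (a u v) 0.
    by rewrite az add0r; right.
  by left.
by rewrite finite_setU; split; apply: finite_offdiag_supp.
Qed.

Lemma FI_mscale c a : FI a -> FI (mscale c a).
Proof.
move=> [inc_a fin_a]; split=> [x y nxy|x y _]; first by rewrite /mscale inc_a // mulr0.
apply: (@sub_finite_set _ _ (offdiag_supp a x y)); last exact: finite_offdiag_supp.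
by move=> [u v] [/= xu uv vy]; rewrite /mscale mulf_eq0 negb_or => /andP[_].
Qed.

Lemma mopp_scale a : mopp a = mscale (-1) a.
Proof. by apply/funext => x; apply/funext => y; rewrite /mopp /mscale mulN1r. Qed.

Lemma FI_mone : FI one.
Proof.
split=> [x y|x y _]; first by rewrite /mone; case: eqP => // ->; rewrite lexx.
apply: (@sub_finite_set _ _ set0); last exact: finite_set0.
by move=> [u v] [/= _ uv _]; rewrite /mone (lt_eqF uv) eqxx.
Qed.

Lemma FI_mzero : FI (@mzero d X K).
Proof.
split=> // x y _; apply: (@sub_finite_set _ _ set0); last exact: finite_set0.
by move=> [u v] [/= _ _ _]; rewrite /mzero eqxx.
Qed.

(* The paper's Z_k, phrased through the support so that it also makes sense for k = 0. *)
Definition Zsupp k a := FI a /\ forall x y, a x y != 0 -> len_ge x y k.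

Lemma Zk_Zsupp k a : (0 < k)%N -> Zk k a <-> Zsupp k a.
Proof.
case: k => // k _; split=> -[FI_a Z_a]; split=> // x y.
  move=> axy; have le_xy := incidence_le FI_a.1 axy.
  have [//|nge] := pselect (len_ge x y k.+1).
  by rewrite Z_a ?eqxx ?len_leNge in axy.
by move=> _ /len_leNge nge; apply/eqP; apply: contra_notT nge; apply: Z_a.
Qed.

Lemma Zsupp0 a : FI a -> Zsupp 0 a.
Proof. by move=> FI_a; split=> // x y /(incidence_le FI_a.1) /len_ge0. Qed.

Lemma Zsupp1 a : Zsupp 1 a <-> FI a /\ forall x, a x x = 0.
Proof.
split=> -[FI_a Z_a]; split=> //; [move=> x | move=> x y axy].
  by apply/eqP; apply: contraT => /Z_a /len_ge1; rewrite ltxx.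
apply/len_ge1; rewrite lt_neqAle (incidence_le FI_a.1 axy) andbT.
by apply: contraNneq axy => ->; rewrite Z_a.
Qed.

Lemma Zsupp_leq m n a : (m <= n)%N -> Zsupp n a -> Zsupp m a.
Proof. by move=> le_mn [FI_a Z_a]; split=> // x y /Z_a; apply: len_ge_leq. Qed.

Lemma Zsupp_mzero k : Zsupp k (@mzero d X K).
Proof. by split=> [|x y]; [exact: FI_mzero | rewrite eqxx]. Qed.

Lemma Zsupp_madd k a b : Zsupp k a -> Zsupp k b -> Zsupp k (madd a b).
Proof.
move=> [FI_a Z_a] [FI_b Z_b]; split=> [|x y]; first exact: FI_madd.
by rewrite /madd; have [->|/Z_a //] := eqVneq (a x y) 0; rewrite add0r => /Z_b.
Qed.

Lemma Zsupp_mscale k c a : Zsupp k a -> Zsupp k (mscale c a).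
Proof.
move=> [FI_a Z_a]; split=> [|x y]; first exact: FI_mscale.
by rewrite mulf_eq0 negb_or => /andP[_ /Z_a].
Qed.

Lemma Zsupp_span k (P : M -> Prop) :
  subset_of P (Zsupp k) -> subset_of (Defs.span P) (Zsupp k).
Proof.
move=> PZ a; elim=> {a} [a /PZ //||a b _ Za _ Zb|c a _ Za].
- exact: Zsupp_mzero.
- exact: Zsupp_madd.
- exact: Zsupp_mscale.
Qed.

Lemma Zsupp_mmul m n a b : Zsupp m a -> Zsupp n b -> Zsupp (m + n) (mmul a b).
Proof.
move=> [FI_a Z_a] [FI_b Z_b]; split=> [|x y]; first exact: FI_mmul.
by move=> /mmul_neq0 [z [_ _ /Z_a ge_xz /Z_b ge_zy]]; apply: len_geD ge_xz ge_zy.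
Qed.

Lemma Zsupp_mcomm m n a b : Zsupp m a -> Zsupp n b -> Zsupp (m + n) (mcomm a b).
Proof.
move=> Za Zb; apply: Zsupp_madd (Zsupp_mmul Za Zb) _.
by rewrite mopp_scale addnC; apply/Zsupp_mscale/Zsupp_mmul.
Qed.

Lemma Zsupp_prodset m n (U V : M -> Prop) :
  subset_of U (Zsupp m) -> subset_of V (Zsupp n) ->
  subset_of (prodset U V) (Zsupp (m + n)).
Proof. by move=> UZ VZ; apply: Zsupp_span => _ [u [v [/UZ Zu /VZ Zv ->]]]; apply: Zsupp_mmul. Qed.

Lemma Zsupp_commset m n (U V : M -> Prop) :
  subset_of U (Zsupp m) -> subset_of V (Zsupp n) ->
  subset_of (commset U V) (Zsupp (m + n)).
Proof. by move=> UZ VZ; apply: Zsupp_span => _ [u [v [/UZ Zu /VZ Zv ->]]]; apply: Zsupp_mcomm. Qed.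

Lemma mcomm_Zsupp1 a b : FI a -> FI b -> Zsupp 1 (mcomm a b).
Proof.
move=> FI_a FI_b; apply/Zsupp1; split=> [|x].
  by rewrite /mcomm mopp_scale; apply/FI_madd/FI_mscale; apply: FI_mmul.
by rewrite /mcomm /madd /mopp !mmul_diag mulrC subrr.
Qed.

Section GeometricSeries.
Variable b : M.
Hypotheses (FI_b : FI b) (b_diag : forall x, b x x = 0).

(* Powers multiply on the right, so no associativity of the convolution is needed. *)
Fixpoint mpow n : M := if n is n'.+1 then mmul (mpow n') b else one.

Definition npairs x y := #|` fset_set (offdiag_supp b x y)|%fset.

(* Powers beyond npairs x y vanish at (x, y) (mpow_neq0), so nothing is truncated. *)
Definition geom : M := fun x y => \sum_(n < (npairs x y).+1) mpow n x y.

Lemma b_neq0_lt x y : b x y != 0 -> (x < y)%O.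
Proof.
move=> bxy; rewrite lt_neqAle (incidence_le FI_b.1 bxy) andbT.
by apply: contraNneq bxy => ->; rewrite b_diag.
Qed.

Lemma npairs_lt x z y : (x <= z)%O -> b z y != 0 -> (npairs x z < npairs x y)%N.
Proof.
move=> xz bzy; have zy := b_neq0_lt bzy.
have fin u v : finite_set (offdiag_supp b u v) by apply: finite_offdiag_supp FI_b.2.
apply: fproper_ltn_card; rewrite fproperE; apply/andP; split.
  rewrite -fset_set_sub ?fin // => -[u v] [/= xu uv vz buv].
  by split=> //; apply: le_trans vz (ltW zy).
apply/negP; rewrite -fset_set_sub ?fin // => /(_ (z, y)) sub.
have [//= _ zy' yz _] : offdiag_supp b x z (z, y) by apply: sub.
by move: (lt_le_trans zy' yz); rewrite ltxx.
Qed.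

Lemma mpow_neq0 n x y : mpow n x y != 0 -> (n <= npairs x y)%N.
Proof.
elim: n y => // n IH y /mmul_neq0 [z [xz _ /IH le_n bzy]].
exact: leq_ltn_trans le_n (npairs_lt xz bzy).
Qed.

Lemma mpowS_supp_ends n x y u v : (x <= u)%O -> (v <= y)%O -> mpow n.+1 u v != 0 ->
  supp_ends b x y u /\ supp_ends b x y v.
Proof.
move=> xu; elim: n v => [|n IH] v vy /mmul_neq0 [z [uz zv pz /[dup] /b_neq0_lt zv' bzv]];
  (split; last by right; exists (z, v); split=> //; apply: le_trans xu uz).
  have euz : u = z by apply/eqP; apply: contraNT pz => /negbTE; rewrite /= /mone => ->.
  by subst z; left; exists (u, v).
exact: (IH z (le_trans (ltW zv') vy) pz).1.
Qed.

Lemma incidence_mpow n : incidence (mpow n).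
Proof. by case: n => [|n]; [apply: FI_mone.1 | apply: incidence_mmul]. Qed.

Lemma FI_geom : FI geom.
Proof.
split=> [x y nxy|x y _]; first by apply: big1 => n _; rewrite incidence_mpow.
apply: (@sub_finite_set _ _ (supp_ends b x y `*` supp_ends b x y)); last first.
  by apply: finite_setX; apply: finite_supp_ends FI_b.2.
move=> [u v] [/= xu uv vy]; rewrite /geom (fsbig_ord _ _ (fun n => mpow n u v)).
move=> /(@fsbigN1 _ _ _ unit _ _ (fun _ n => mpow n u v) tt) [[|n] _].
  by rewrite /= /mone (lt_eqF uv) eqxx.
by move=> /(mpowS_supp_ends xu vy).
Qed.

Lemma sum_mpow_geom m x y : (npairs x y < m)%N -> \sum_(n < m) mpow n x y = geom x y.
Proof.
move=> lt_m; rewrite /geom (big_ord_widen _ (fun n => mpow n x y) lt_m) [RHS]big_mkcond /=.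
apply: eq_bigr => n _; case: ifPn => //; rewrite -leqNgt => lt_n.
by apply/eqP; apply: contraTT lt_n => /mpow_neq0; rewrite -ltnNge ltnS.
Qed.

(* y is included for the diagonal entry of 1 - b at (y, y). *)
Definition col_supp x y : {fset X} := (y |` fset_set (fst @` offdiag_supp b x y))%fset.

Lemma col_supp_interval x y z :
  (x <= y)%O -> z \in col_supp x y -> (x <= z)%O /\ (z <= y)%O.
Proof.
move=> xy; rewrite !inE in_fset_set; last exact/finite_image/finite_offdiag_supp/FI_b.2.
case/orP=> [/eqP ->|/set_mem [[u v] [/= xu uv vy _] <-]]; split=> //.
exact: le_trans (ltW uv) vy.
Qed.

Lemma mem_col_supp x y z : (x <= z)%O -> b z y != 0 -> z \in col_supp x y.
Proof.
move=> xz bzy; rewrite !inE in_fset_set; last exact/finite_image/finite_offdiag_supp/FI_b.2.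
by apply/orP; right; apply/mem_set; exists (z, y); split=> //; apply: b_neq0_lt.
Qed.

Lemma mmul_geom x y : (x <= y)%O ->
  mmul geom b x y = \sum_(n < (npairs x y).+1) mpow n.+1 x y.
Proof.
move=> xy; have S_sub := col_supp_interval xy.
rewrite (mmul_fsetE _ S_sub (@mem_col_supp x y)).
transitivity (\sum_(z <- col_supp x y) \sum_(n < (npairs x y).+1) mpow n x z * b z y).
  apply: eq_big_seq => z /S_sub [xz _]; rewrite -mulr_suml.
  have [->|bzy] := eqVneq (b z y) 0; first by rewrite !mulr0.
  by rewrite sum_mpow_geom // ltnS ltnW // npairs_lt.
rewrite exchange_big; apply: eq_bigr => n _.
by rewrite /= (mmul_fsetE _ S_sub (@mem_col_supp x y)).
Qed.

Lemma geom_left_inverse : mmul geom (madd one (mopp b)) = one.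
Proof.
apply/funext => x; apply/funext => y.
have [xy|nxy] := boolP (x <= y)%O; last by rewrite incidence_mmul // FI_mone.1.
have S_sub := col_supp_interval xy.
have in_S z : (x <= z)%O -> madd one (mopp b) z y != 0 -> z \in col_supp x y.
  move=> xz; have [->|nzy] := eqVneq z y; first by rewrite fsetU11.
  by rewrite /madd /mopp /mone (negbTE nzy) add0r oppr_eq0; apply: mem_col_supp.
rewrite (mmul_fsetE _ S_sub in_S); under eq_bigr do rewrite /madd /mopp mulrDr mulrN.
rewrite big_split sumrN -(mmul_fsetE _ S_sub (@mem_col_supp x y)).
rewrite mmul_geom // (bigD1_seq y) ?fset_uniq ?fsetU11 //= /mone eqxx mulr1.
rewrite big1 => [|z /negbTE ->]; last by rewrite mulr0.
have pow_vanish : mmul (mpow (npairs x y)) b x y = 0.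
  by apply/eqP; apply: contraTT (ltnSn (npairs x y)) => /(@mpow_neq0 _.+1); rewrite -ltnNge.
rewrite addr0 /geom big_ord_recl [X in _ - X]big_ord_recr /= pow_vanish addr0.
by under eq_bigr do rewrite add0n; rewrite addrK.
Qed.

End GeometricSeries.

Lemma Zsupp1_Jac : subset_of (Zsupp 1) (@Jac d X K).
Proof.
move=> a /Zsupp1 [FI_a a_diag]; split=> // r FI_r; have FI_ra := FI_mmul FI_r FI_a.
have ra_diag x : mmul r a x x = 0 by rewrite mmul_diag a_diag mulr0.
by exists (geom (mmul r a)); split; [apply: FI_geom | apply: geom_left_inverse].
Qed.

Lemma Jac_Zsupp1 : subset_of (@Jac d X K) (Zsupp 1).
Proof.
move=> a [FI_a inv]; apply/Zsupp1; split=> // x; apply/eqP; apply: contraT => ax.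
have [s [_ /(congr1 (fun c => c x x))]] := inv _ (FI_mscale (a x x)^-1 FI_mone).
rewrite /madd /mopp /mscale !mmul_diag /mone eqxx mulr1 mulVf // subrr mulr0.
by move/esym/eqP; rewrite oner_eq0.
Qed.

Lemma FIder_Zsupp n : subset_of (FIder n.+1) (Zsupp (2 ^ n)).
Proof.
elim: n => [|n IH].
  apply: (@Zsupp_prodset 1 0) Zsupp0.
  by apply: Zsupp_span => _ [u [v [FI_u FI_v ->]]]; apply: mcomm_Zsupp1.
have := Zsupp_prodset (Zsupp_commset IH IH) Zsupp0.
by rewrite addn0 addnn -mul2n -expnS.
Qed.

Lemma Jder_Zsupp n : subset_of (Jder n) (Zsupp (2 ^ n)).
Proof.
elim: n => [|n IH]; first exact: Jac_Zsupp1.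
move=> a /(Zsupp_prodset (Zsupp_commset IH IH) Jac_Zsupp1); apply: Zsupp_leq.
by rewrite expnS mul2n -addnn leq_addr.
Qed.

Lemma gamma_Zsupp n : subset_of (gamma n.+1) (Zsupp n.+1).
Proof.
elim: n => [|n IH]; first exact: Jac_Zsupp1.
by have := Zsupp_commset IH Jac_Zsupp1; rewrite addn1.
Qed.

End IncidenceAlgebra.

Local Close Scope ring_scope.
Local Close Scope classical_set_scope.

Theorem lemma1p2 (d : Order.disp_t) (X : porderType d) (K : fieldType) :
  [/\ subset_of (@FIder d X K 1) (@Zk d X K 1)
        /\ (forall a, @Zk d X K 1 a <-> @Jac d X K a),
      (forall m n : nat, (0 < m)%N -> (0 < n)%N ->
         subset_of (@prodset d X K (@Zk d X K m) (@Zk d X K n)) (@Zk d X K (m + n))),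
      (forall n : nat, (0 < n)%N -> subset_of (@gamma d X K n) (@Zk d X K n)),
      (forall n : nat, (0 < n)%N ->
         subset_of (@FIder d X K n) (@Zk d X K (2 ^ n.-1)))
    & (forall n : nat, subset_of (@Jder d X K n) (@Zk d X K (2 ^ n)))].
Proof.
have Zk_sub k P : subset_of P (Zsupp k) -> (0 < k)%N -> subset_of P (@Zk d X K k).
  by move=> PZ k_gt0 a /PZ /(Zk_Zsupp _ k_gt0).
have Zsupp_Zk k : (0 < k)%N -> subset_of (@Zk d X K k) (Zsupp k).
  by move=> k_gt0 a /(Zk_Zsupp _ k_gt0).
split.
- split=> [|a]; first exact: Zk_sub (FIder_Zsupp (n := 0)) _.
  by rewrite Zk_Zsupp //; split; [apply: Zsupp1_Jac | apply: Jac_Zsupp1].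
- move=> m n m_gt0 n_gt0.
  by apply: Zk_sub (Zsupp_prodset (Zsupp_Zk _ m_gt0) (Zsupp_Zk _ n_gt0)) _; rewrite addn_gt0 m_gt0.
- by case=> // n _; apply: Zk_sub (gamma_Zsupp (n := n)) _.
- by case=> // n _; apply: Zk_sub (FIder_Zsupp (n := n)) _; rewrite expn_gt0.
- by move=> n; apply: Zk_sub (Jder_Zsupp (n := n)) _; rewrite expn_gt0.
Qed.
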